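(* Let $f:\mathbb{R}^n\to\mathbb{R}$ be continuous with bounded lower-level sets, and let $\gamma_k>0$, $\delta_k>0$ with $\gamma_k\delta_k\le c$ for all $k$ and some $c>0$. Then, for arbitrary $\hat x\in X$, all $k$, and every $x_k^*\in X_k^*$, $$\mathrm{dist}(x_k^*,X)\le\frac{m\beta}{\gamma_k}\big(f(\hat x)-f(x_k^* )\big)+\frac{m\beta\,\delta_k}{4\alpha_{\min}}.$$ In particular, if $\gamma_k\to\infty$ and $\delta_k\to0$, then $\lim_{k\to\infty}\mathrm{dist}(x_k^*,X)=0$, with convergence rate of order $O(\gamma_k^{-1}+\delta_k)$.
   Context: Let $a_1,\dots,a_m\in\mathbb{R}^n$ be nonzero vectors and $b_1,\dots,b_m\in\mathbb{R}$; $X_i=\{x:\langle a_i,x\rangle-b_i\le0\}$, $X=\bigcap_{i=1}^mX_i$ (assumed nonempty), $\alpha_{\min}=\min_i\|a_i\|$, and $\mathrm{dist}(x,Y)$ is the Euclidean distance from $x$ to $Y$. $\beta>0$ is a Hoffman constant: a scalar such that $\beta\sum_{i=1}^m\mathrm{dist}(x,X_i)\ge\mathrm{dist}(x,X)$ for all $x\in\mathbb{R}^n$ (such a scalar exists). For $\delta>0$, nonzero $a$ and scalar $b$: $h_\delta(x;a,b)=\frac{\langle a,x\rangle-b}{\|a\|}$ if $\langle a,x\rangle-b>\delta$, $\frac{(\langle a,x\rangle-b+\delta)^2}{4\delta\|a\|}$ if $-\delta\le\langle a,x\rangle-b\le\delta$, $0$ if $\langle a,x\rangle-b<-\delta$.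 For each $k$, $F_k(x)=f(x)+\frac{\gamma_k}{m}\sum_{i=1}^m h_{\delta_k}(x;a_i,b_i)$, and $X_k^*$ is the set of minimizers of $F_k$ over $\mathbb{R}^n$. *)

From HB Require Import structures.
From mathcomp Require Import all_boot all_order all_algebra.
From mathcomp Require Import all_classical all_reals all_analysis.
Set Implicit Arguments. Unset Strict Implicit. Unset Printing Implicit Defensive.
Import Order.TTheory GRing.Theory Num.Theory.
Import numFieldNormedType.Exports.
Local Open Scope classical_set_scope.
Local Open Scope ring_scope.

Section Defs.
Variables (R : realType) (n : nat).

Definition dotv (u v : 'rV[R]_n) : R := \sum_(i < n) u ord0 i * v ord0 i.
Definition eucl_norm (u : 'rV[R]_n) : R := Num.sqrt (dotv u u).

Definition setdist (x : 'rV[R]_n) (Y : set 'rV[R]_n) : R :=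
  inf [set eucl_norm (x - y) | y in Y].

Definition halfspace (a : 'rV[R]_n) (b : R) : set 'rV[R]_n :=
  [set x | dotv a x - b <= 0].

Definition hdelta (delta : R) (a : 'rV[R]_n) (b : R) (x : 'rV[R]_n) : R :=
  let t := dotv a x - b in
  if delta < t then t / eucl_norm a
  else if - delta <= t then (t + delta) ^+ 2 / (4 * delta * eucl_norm a)
  else 0.

Definition bounded_lower_level_sets (f : 'rV[R]_n -> R) : Prop :=
  forall t : R, exists M : R, forall x, f x <= t -> eucl_norm x <= M.

End Defs.

Section Problem.
Variables (R : realType) (n m : nat)
  (a : 'I_m -> 'rV[R]_n) (b : 'I_m -> R).

Definition Xi (i : 'I_m) : set 'rV[R]_n := halfspace (a i) (b i).
Definition Xfeas : set 'rV[R]_n := [set x | forall i, Xi i x].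
Definition alpha_min : R := inf [set eucl_norm (a i) | i in [set: 'I_m]].

Definition is_hoffman (beta : R) : Prop :=
  0 < beta /\
  forall x : 'rV[R]_n, beta * (\sum_(i < m) setdist x (Xi i)) >= setdist x Xfeas.

Definition Fk (f : 'rV[R]_n -> R) (gamma delta : nat -> R) (k : nat)
  (x : 'rV[R]_n) : R :=
  f x + gamma k / m%:R * \sum_(i < m) hdelta (delta k) (a i) (b i) x.

Definition Xkstar (f : 'rV[R]_n -> R) (gamma delta : nat -> R) (k : nat)
  : set 'rV[R]_n :=
  [set x | forall y, Fk f gamma delta k x <= Fk f gamma delta k y].
End Problem.

(** Hoffman's bound gives dist(x, X) <= beta * sum_i dist(x, X_i), and the
   distance to a half-space is at most the positive part of the normalised
   residual, which the smoothed hinge h_delta dominates.  At a feasible point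
   h_delta is at most delta / (4 |a_i|), so comparing F_k at a minimiser x_k
   and at a feasible xhat turns the penalty gap into
   (m / gamma_k) (f xhat - f x_k), which gives the estimate.  A continuous
   function with bounded lower-level sets is bounded below (it is bounded on
   the compact box containing one lower-level set), so f xhat - f x_k is
   bounded uniformly in k, whence the O(1/gamma_k + delta_k) rate. *)

From mathcomp Require Import all_boot all_order all_algebra.
From mathcomp Require Import all_classical all_reals all_analysis.
From mathcomp Require Import ring lra.
Set Implicit Arguments. Unset Strict Implicit. Unset Printing Implicit Defensive.
Import Order.TTheory GRing.Theory Num.Theory.
Import numFieldNormedType.Exports.
Local Open Scope classical_set_scope.
Local Open Scope ring_scope.

Lemma inf_ge0 (R : realType) (E : set R) : lbound E 0 -> 0 <= inf E.
Proof.
move=> E_ge0; have [E_neq0|/nonemptyPn ->] := pselect (E !=set0).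
  exact: lb_le_inf.
by rewrite inf0.
Qed.

Section Euclidean.
Variables (R : realType) (n : nat).
Implicit Types (u x a : 'rV[R]_n) (Y : set 'rV[R]_n).

Lemma dotv_ge0 u : 0 <= dotv u u.
Proof. by apply: sumr_ge0 => i _; rewrite -expr2 sqr_ge0. Qed.

Lemma eucl_norm_ge0 u : 0 <= eucl_norm u.
Proof. exact: sqrtr_ge0. Qed.

Lemma eucl_norm_sq u : eucl_norm u ^+ 2 = dotv u u.
Proof. by rewrite sqr_sqrtr // dotv_ge0. Qed.

Lemma eucl_norm0 : eucl_norm (0 : 'rV[R]_n) = 0.
Proof. by rewrite /eucl_norm /dotv big1 ?sqrtr0 // => i _; rewrite mxE mulr0. Qed.

Lemma eucl_normZ s u : eucl_norm (s *: u) = `|s| * eucl_norm u.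
Proof.
rewrite /eucl_norm -sqrtr_sqr -sqrtrM ?sqr_ge0 //; congr Num.sqrt.
by rewrite /dotv mulr_sumr; apply: eq_bigr => i _; rewrite !mxE; ring.
Qed.

Lemma coord_le_eucl_norm u i : `|u ord0 i| <= eucl_norm u.
Proof.
rewrite /eucl_norm -(sqrtr_sqr (u ord0 i)) ler_wsqrtr //.
rewrite /dotv (bigD1 i) //= -expr2 lerDl.
by apply: sumr_ge0 => j _; rewrite -expr2 sqr_ge0.
Qed.

Lemma eucl_norm_gt0 u : u != 0 -> 0 < eucl_norm u.
Proof.
move=> u_neq0; have [i ui_neq0] : exists i, u ord0 i != 0.
  apply: contrapT => /forallNP ui0; move/eqP: u_neq0; apply.
  by apply/rowP => i; rewrite mxE; apply/eqP/negbNE/negP/ui0.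
by apply: lt_le_trans (coord_le_eucl_norm u i); rewrite normr_gt0.
Qed.

Lemma dotvBZr a x s : dotv a (x - s *: a) = dotv a x - s * dotv a a.
Proof. by rewrite /dotv mulr_sumr -sumrB; apply: eq_bigr => i _; rewrite !mxE; ring. Qed.

Lemma setdist_ge0 x Y : 0 <= setdist x Y.
Proof. by apply: inf_ge0 => _ [y _ <-]; exact: eucl_norm_ge0. Qed.

Lemma setdist_le x Y y : Y y -> setdist x Y <= eucl_norm (x - y).
Proof.
move=> Yy; apply: ge_inf; last by exists y.
by exists 0 => _ [z _ <-]; exact: eucl_norm_ge0.
Qed.

Lemma setdist_halfspace_le a b x : a != 0 ->
  setdist x (halfspace a b) <= Num.max 0 ((dotv a x - b) / eucl_norm a).
Proof.
move=> a_neq0; have a_gt0 := eucl_norm_gt0 a_neq0.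
have aa_gt0 : 0 < dotv a a by rewrite -eucl_norm_sq exprn_gt0.
set t := dotv a x - b; have [t_le0|t_gt0] := lerP t 0.
  rewrite le_max; apply/orP; left.
  by rewrite -eucl_norm0 -(subrr x); apply: setdist_le.
rewrite le_max; apply/orP; right.
have t_ge0 : 0 <= t / dotv a a by rewrite divr_ge0 ?ltW.
(* the orthogonal projection of x onto the boundary hyperplane *)
apply: le_trans (setdist_le x (y := x - (t / dotv a a) *: a) _) _.
  by rewrite /halfspace /= dotvBZr mulfVK ?gt_eqF // /t; lra.
rewrite opprB addrC subrK eucl_normZ ger0_norm // -eucl_norm_sq.
by rewrite expr2 invfM mulrA mulfVK ?gt_eqF.
Qed.

End Euclidean.

Section SmoothedHinge.
Variables (R : realType) (n : nat) (d : R) (a : 'rV[R]_n) (b : R).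

Lemma hdelta_ge0 x : 0 < d -> 0 <= hdelta d a b x.
Proof.
move=> d_gt0; rewrite /hdelta; set t := dotv a x - b.
case: ifP => [d_lt_t|_]; first by rewrite divr_ge0 ?eucl_norm_ge0 //; lra.
case: ifP => _ //.
by rewrite divr_ge0 ?sqr_ge0 // !mulr_ge0 ?eucl_norm_ge0 // ltW.
Qed.

Lemma hdelta_ge_residual x : 0 < d -> a != 0 ->
  (dotv a x - b) / eucl_norm a <= hdelta d a b x.
Proof.
move=> d_gt0 /eucl_norm_gt0 a_gt0; rewrite /hdelta; set t := dotv a x - b.
case: ifP => [//|_]; case: ifP => [_|/negbT]; last first.
  by rewrite -ltNge => t_lt; rewrite pmulr_lle0 ?invr_gt0 //; lra.
rewrite invfM mulrA ler_pM2r ?invr_gt0 // ler_pdivlMr; last lra.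
(* 4 d t <= (t + d)^2 is (t - d)^2 >= 0 *)
by have := sqr_ge0 (t - d); nra.
Qed.

Lemma setdist_halfspace_le_hdelta x : 0 < d -> a != 0 ->
  setdist x (halfspace a b) <= hdelta d a b x.
Proof.
move=> d_gt0 a_neq0; apply: le_trans (setdist_halfspace_le b x a_neq0) _.
by rewrite ge_max hdelta_ge0 ?hdelta_ge_residual.
Qed.

Lemma hdelta_le_halfspace x : 0 < d -> a != 0 -> halfspace a b x ->
  hdelta d a b x <= d / (4 * eucl_norm a).
Proof.
move=> d_gt0 /eucl_norm_gt0 a_gt0.
rewrite /halfspace /hdelta /=; set t := dotv a x - b => t_le0.
case: ifP => [d_lt_t|_]; first lra.
case: ifP => [t_ge|_]; last by rewrite divr_ge0 ?mulr_ge0 ?ltW.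
rewrite ler_pdivrMr; last by rewrite !mulr_gt0 //; lra.
have -> : d / (4 * eucl_norm a) * (4 * d * eucl_norm a) = d ^+ 2.
  by field; rewrite gt_eqF.
nra.
Qed.

End SmoothedHinge.

Lemma bounded_lower_level_sets_lbound (R : realType) n (f : 'rV[R]_n -> R) :
  continuous f -> bounded_lower_level_sets f -> exists L, forall x, L <= f x.
Proof.
move=> f_cont f_lls; have [M f0_lls] := f_lls (f 0).
pose K := [set v : 'rV[R]_n | forall i, [set` `[- M, M]] (v ord0 i)].
have K_compact : compact K := rV_compact (fun=> @segment_compact R (- M) M).
have fK_compact : compact (f @` K).
  by apply: continuous_compact => //; exact: continuous_subspaceT.
have [B [_ fK_bounded]] := compact_bounded fK_compact.
have B_lt : B < B + 1 by rewrite ltrDl.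
exists (Num.min (f 0) (- (B + 1))) => x.
have [f0_lt|fx_le] := ltrP (f 0) (f x); first by rewrite ge_min ltW.
have Kx : K x.
  move=> i; rewrite /= in_itv /=.
  have := f0_lls x fx_le; have /ler_normlP := coord_le_eucl_norm x i.
  by move=> [xi_ge xi_le] x_le; apply/andP; split; lra.
have /ler_normlP[fx_ge _] := fK_bounded (B + 1) B_lt (f x) (ex_intro2 _ _ x Kx erefl).
by rewrite ge_min; apply/orP; right; lra.
Qed.

Lemma cvg0_le_rate (R : realType) (u gamma delta : R^nat) (C : R) :
  (forall k, 0 <= u k <= C * ((gamma k)^-1 + delta k)) ->
  gamma @ \oo --> +oo -> delta @ \oo --> 0 -> u @ \oo --> 0.
Proof.
move=> u_bnd gamma_oo delta0.
apply: (@squeeze_cvgr _ _ _ _ (fun=> 0) (fun k => C * ((gamma k)^-1 + delta k))).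
- by near=> k; exact: u_bnd.
- exact: cvg_cst.
rewrite -[X in _ --> X](mulr0 C) -[X in _ --> C * X](addr0 0).
apply: cvgMl_tmp; apply: cvgD => //.
by apply/gtr0_cvgV0 => //; exact: (proj1 (cvgryPgt gamma) gamma_oo 0).
Unshelve. all: end_near.
Qed.

Section PenalizedProblem.
Variables (R : realType) (n m : nat) (a : 'I_m -> 'rV[R]_n) (b : 'I_m -> R).
Hypothesis a_neq0 : forall i, a i != 0.

Definition penalty (d : R) (x : 'rV[R]_n) : R := \sum_(i < m) hdelta d (a i) (b i) x.

Lemma alpha_min_ge0 : 0 <= alpha_min a.
Proof. by apply: inf_ge0 => _ [i _ <-]; exact: eucl_norm_ge0. Qed.

Lemma alpha_min_le i : alpha_min a <= eucl_norm (a i).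
Proof.
apply: ge_inf; last by exists i.
by exists 0 => _ [j _ <-]; exact: eucl_norm_ge0.
Qed.

Lemma alpha_min_gt0 : (0 < m)%N -> 0 < alpha_min a.
Proof.
move=> m_gt0.
have [i _ i_min] := arg_minP (fun i => eucl_norm (a i)) (isT : predT (Ordinal m_gt0)).
apply: lt_le_trans (eucl_norm_gt0 (a_neq0 i)) _.
apply: lb_le_inf; first by exists (eucl_norm (a i)), i.
by move=> _ [j _ <-]; exact: i_min.
Qed.

Lemma sum_setdist_le_penalty d x : 0 < d ->
  \sum_(i < m) setdist x (Xi a b i) <= penalty d x.
Proof. by move=> d_gt0; apply: ler_sum => i _; exact: setdist_halfspace_le_hdelta. Qed.

Lemma penalty_le_feasible d x : 0 < d -> Xfeas a b x ->
  penalty d x <= m%:R * d / (4 * alpha_min a).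
Proof.
move=> d_gt0 x_feas; rewrite -mulrA mulr_natl -[in X in _ *+ X](card_ord m) -sumr_const.
apply: ler_sum => i _; apply: le_trans (hdelta_le_halfspace d_gt0 (a_neq0 i) (x_feas i)) _.
have alpha_gt0 := alpha_min_gt0 (leq_ltn_trans (leq0n i) (ltn_ord i)).
by rewrite ler_pM2l // lef_pV2 ?posrE ?mulr_gt0 ?eucl_norm_gt0 // ler_pM2l // alpha_min_le.
Qed.

Lemma minimizer_penalty_le f gamma delta k xk y : (0 < m)%N -> 0 < gamma k ->
  Xkstar a b f gamma delta k xk ->
  penalty (delta k) xk <= penalty (delta k) y + m%:R / gamma k * (f y - f xk).
Proof.
move=> m_gt0 gamma_gt0 /(_ y); rewrite /Fk -!/(penalty _ _) => Fk_le.
rewrite -invf_div -lerBlDl ler_pdivlMl ?divr_gt0 ?ltr0n //; move: Fk_le; lra.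
Qed.

Lemma setdist_minimizer_le beta f gamma delta k xhat xk :
  is_hoffman a b beta -> 0 < gamma k -> 0 < delta k ->
  Xfeas a b xhat -> Xkstar a b f gamma delta k xk ->
  setdist xk (Xfeas a b) <=
    m%:R * beta / gamma k * (f xhat - f xk) + m%:R * beta * delta k / (4 * alpha_min a).
Proof.
move=> [beta_gt0 hoffman] gamma_gt0 delta_gt0 xhat_feas xk_min.
apply: le_trans (hoffman xk) _.
have [m0|m_gt0] := posnP m.
  have m0R : m%:R = 0 :> R by rewrite m0.
  rewrite big1 => [|i]; last by have := ltn_ord i; rewrite {2}m0.
  by rewrite m0R !mul0r mulr0 addr0.
have := sum_setdist_le_penalty xk delta_gt0.
have := minimizer_penalty_le xhat m_gt0 gamma_gt0 xk_min.
have := penalty_le_feasible delta_gt0 xhat_feas.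
nra.
Qed.

Lemma setdist_minimizer_rate beta f gamma delta xhat L :
  is_hoffman a b beta -> (forall k, 0 < gamma k) -> (forall k, 0 < delta k) ->
  Xfeas a b xhat -> (forall x, L <= f x) ->
  exists C, forall k xk, Xkstar a b f gamma delta k xk ->
    setdist xk (Xfeas a b) <= C * ((gamma k)^-1 + delta k).
Proof.
move=> hoffman gamma_gt0 delta_gt0 xhat_feas f_ge.
have p_ge0 : 0 <= m%:R * beta by rewrite mulr_ge0 ?ler0n // ltW //; case: hoffman.
set q := m%:R * beta / (4 * alpha_min a).
have q_ge0 : 0 <= q by rewrite divr_ge0 // mulr_ge0 ?alpha_min_ge0.
exists (m%:R * beta * (f xhat - L) + q) => k xk xk_min.
apply: le_trans (setdist_minimizer_le hoffman (gamma_gt0 k) (delta_gt0 k) xhat_feas xk_min) _.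
have gap_le : m%:R * beta / gamma k * (f xhat - f xk) <= m%:R * beta / gamma k * (f xhat - L).
  by apply: ler_wpM2l; [rewrite divr_ge0 // ltW | rewrite lerD2l lerN2 f_ge].
have gap_ge0 : 0 <= f xhat - L by rewrite subr_ge0 f_ge.
have := mulr_ge0 (mulr_ge0 p_ge0 gap_ge0) (ltW (delta_gt0 k)).
have gamma_inv_ge0 : 0 <= (gamma k)^-1 by rewrite invr_ge0 ltW.
have := mulr_ge0 q_ge0 gamma_inv_ge0.
move: gap_le; rewrite /q; lra.
Qed.
End PenalizedProblem.

Theorem proposition5 (R : realType) (n m : nat)
  (a : 'I_m -> 'rV[R]_n) (b : 'I_m -> R)
  (Ha : forall i, a i != 0)
  (HX : Xfeas a b !=set0)
  (beta : R) (Hbeta : is_hoffman a b beta)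
  (f : 'rV[R]_n -> R) (Hfc : continuous f)
  (Hfb : bounded_lower_level_sets f)
  (gamma delta : nat -> R) (c : R) (Hc : 0 < c)
  (Hgamma : forall k, 0 < gamma k) (Hdelta : forall k, 0 < delta k)
  (Hgd : forall k, gamma k * delta k <= c) :
  (forall xhat, Xfeas a b xhat -> forall k xk, Xkstar a b f gamma delta k xk ->
     setdist xk (Xfeas a b) <=
       m%:R * beta / gamma k * (f xhat - f xk)
       + m%:R * beta * delta k / (4 * alpha_min a)) /\
  (exists C : R, forall k xk, Xkstar a b f gamma delta k xk ->
     setdist xk (Xfeas a b) <= C * ((gamma k)^-1 + delta k)) /\
  (gamma @ \oo --> +oo -> delta @ \oo --> 0 ->
   forall xs : nat -> 'rV[R]_n,
     (forall k, Xkstar a b f gamma delta k (xs k)) ->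
     (fun k => setdist (xs k) (Xfeas a b)) @ \oo --> 0).
Proof.
have [L f_ge] := bounded_lower_level_sets_lbound Hfc Hfb.
have [xhat xhat_feas] := HX.
have [C rate] := setdist_minimizer_rate Ha Hbeta Hgamma Hdelta xhat_feas f_ge.
split; first by move=> xh xh_feas k xk; exact: setdist_minimizer_le.
split; first by exists C.
move=> gamma_oo delta0 xs xs_min.
apply: (cvg0_le_rate (C := C)) gamma_oo delta0 => k.
by rewrite setdist_ge0 rate.
Qed.
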